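(* Let $m\in\mathbb{Z}_{>0}$ and $n\in\mathbb{Z}_{\ge 0}$ with $m\geq n$, and let $\psi=\psi_{m,n}:\mathcal{G}^{(m,n)}\to\mathbb{C}$ be a Whittaker function. If $\psi(I_{m+n-1})\,\psi(J_{m+n-1})\neq 0$, then the induced module $W'=\mathrm{Ind}_{\mathcal{G}^{(m,n)}}^{\mathcal{G}^{(m,0)}}\mathbb{C}w_{\psi}=\mathcal{U}(\mathcal{G}^{(m,0)})\otimes_{\mathcal{U}(\mathcal{G}^{(m,n)})}\mathbb{C}w_\psi$ is an irreducible $\mathcal{G}^{(m,0)}$-module. Moreover, for all $w\in W'$ and all $i\in\mathbb{Z}_{\ge0}$, $$L_{m+n+i}w=\psi(L_{m+n+i})w,\quad H_{m+n+i}w=\psi(H_{m+n+i})w,\quad I_{n+i}w=\psi(I_{n+i})w,\quad J_{n+i}w=\psi(J_{n+i})w.$$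
   Context: $\mathcal{G}$ is the complex Lie algebra with basis $\{L_n,H_n,I_n,J_n,\mathbf{c}_1,\mathbf{c}_2,\mathbf{c}_3: n\in\mathbb{Z}\}$ whose brackets of basis elements are $[L_m,L_n]=(n-m)L_{m+n}+\frac{m^3-m}{12}\delta_{m+n,0}\mathbf{c}_1$, $[L_m,H_n]=nH_{m+n}+m^2\delta_{m+n,0}\mathbf{c}_2$, $[H_m,H_n]=m\delta_{m+n,0}\mathbf{c}_3$, $[L_m,I_n]=(n-m)I_{m+n}$, $[L_m,J_n]=(n-m)J_{m+n}$, $[H_m,I_n]=I_{m+n}$, $[H_m,J_n]=-J_{m+n}$ (and the antisymmetric counterparts), all other brackets of basis elements being zero (so $\mathbf{c}_1,\mathbf{c}_2,\mathbf{c}_3$ are central and the $I$'s and $J$'s commute among themselves). For $m,n\in\mathbb{Z}_{\ge0}$ let $\mathcal{G}^{(m,n)}=\sum_{i\ge0}(\mathbb{C}L_{m+i}+\mathbb{C}H_{m+i}+\mathbb{C}I_{n+i}+\mathbb{C}J_{n+i})+\mathbb{C}\mathbf{c}_1+\mathbb{C}\mathbf{c}_2+\mathbb{C}\mathbf{c}_3$, a subalgebra. A Whittaker function $\psi_{m,n}$ is a Lie algebra homomorphism $\mathcal{G}^{(m,n)}\to\mathbb{C}$ (i.e. a linear map vanishing on $[\mathcal{G}^{(m,n)},\mathcal{G}^{(m,n)}]$); $\mathbb{C}w_{\psi}$ denotes the one-dimensional $\mathcal{G}^{(m,n)}$-module with $x\cdot w_\psi=\psi(x)w_\psi$. *)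

(* The complex field is R[i] (mathcomp-real-closed) over an
   arbitrary model R : realType of the real numbers. *)
From HB Require Import structures.
From mathcomp Require Import all_boot all_order all_algebra.
From mathcomp Require Import reals.
From mathcomp Require Export complex.
Set Implicit Arguments. Unset Strict Implicit. Unset Printing Implicit Defensive.
Import Order.TTheory GRing.Theory Num.Theory.
Local Open Scope ring_scope.

Inductive gbasis : Type :=
  | BL of int | BH of int | BI of int | BJ of int | Bc1 | Bc2 | Bc3.

Section LieAlg.
Variable R : realType.
Local Notation C := (R[i]).

Definition cint (k : int) : C := k%:~R.
Definition delta0 (k : int) : C := (k == 0)%:R.

(* The bracket [a, b] of two basis elements, as a finite linear combination
   (list of (coefficient, basis element)) of basis elements. *)
Definition brk (a b : gbasis) : seq (C * gbasis) :=
  match a, b with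
  | BL p, BL q => [:: (cint (q - p), BL (p + q));
                      (cint (p ^+ 3 - p) / 12%:R * delta0 (p + q), Bc1)]
  | BL p, BH q => [:: (cint q, BH (p + q)); (cint (p ^+ 2) * delta0 (p + q), Bc2)]
  | BH p, BL q => [:: (- cint p, BH (p + q)); (- (cint (q ^+ 2) * delta0 (p + q)), Bc2)]
  | BH p, BH q => [:: (cint p * delta0 (p + q), Bc3)]
  | BL p, BI q => [:: (cint (q - p), BI (p + q))]
  | BI p, BL q => [:: (- cint (p - q), BI (p + q))]
  | BL p, BJ q => [:: (cint (q - p), BJ (p + q))]
  | BJ p, BL q => [:: (- cint (p - q), BJ (p + q))]
  | BH p, BI q => [:: (1, BI (p + q))]
  | BI p, BH q => [:: (-1, BI (p + q))]
  | BH p, BJ q => [:: (-1, BJ (p + q))]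
  | BJ p, BH q => [:: (1, BJ (p + q))]
  | _, _ => [::]
  end.

Definition inG (m n : nat) (b : gbasis) : bool :=
  match b with
  | BL k | BH k => (m%:Z <= k)
  | BI k | BJ k => (n%:Z <= k)
  | Bc1 | Bc2 | Bc3 => true
  end.

(* A Whittaker function psi_{m,n}: a linear map G^(m,n) -> C (given by its
   values on the basis) vanishing on [G^(m,n), G^(m,n)], i.e. on all brackets
   of basis elements of G^(m,n). *)
Definition whittaker (m n : nat) (psi : gbasis -> C) : Prop :=
  forall a b, inG m n a -> inG m n b ->
    \sum_(p <- brk a b) p.1 * psi p.2 = 0.

(* A G^(m,n)-module structure on the C-vector space V: linear actions of the
   basis elements of G^(m,n) satisfying the bracket relations. *)
Definition is_rep (m n : nat) (V : lmodType C) (rho : gbasis -> V -> V) : Prop :=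
  (forall b, inG m n b -> forall (c : C) (u v : V),
      rho b (c *: u + v) = c *: rho b u + rho b v) /\
  (forall a b, inG m n a -> inG m n b -> forall v : V,
      rho a (rho b v) - rho b (rho a v) = \sum_(p <- brk a b) p.1 *: rho p.2 v).

(* (V, rho, w) is the induced module Ind_{G^(m,n)}^{G^(m,0)} C w_psi
   = U(G^(m,0)) (x)_{U(G^(m,n))} C w_psi, characterized (up to unique
   isomorphism) by its universal property: a G^(m,0)-module with a vector w
   on which G^(m,n) acts by psi, such that for every G^(m,0)-module V' and
   w' in V' on which G^(m,n) acts by psi there is a unique G^(m,0)-module
   homomorphism V -> V' sending w to w'. *)
Definition is_induced (m n : nat) (psi : gbasis -> C)
    (V : lmodType C) (rho : gbasis -> V -> V) (w : V) : Prop :=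
  [/\ is_rep m 0 rho,
      (forall b, inG m n b -> rho b w = psi b *: w) &
      forall (V' : lmodType C) (rho' : gbasis -> V' -> V') (w' : V'),
        is_rep m 0 rho' ->
        (forall b, inG m n b -> rho' b w' = psi b *: w') ->
        exists f : V -> V',
          [/\ (forall (c : C) (u v : V), f (c *: u + v) = c *: f u + f v),
              (forall b, inG m 0 b -> forall v, f (rho b v) = rho' b (f v)),
              f w = w' &
              forall g : V -> V',
                (forall (c : C) (u v : V), g (c *: u + v) = c *: g u + g v) ->
                (forall b, inG m 0 b -> forall v, g (rho b v) = rho' b (g v)) ->
                g w = w' -> forall v, g v = f v]].

Definition irreducible_mod (m : nat) (V : lmodType C) (rho : gbasis -> V -> V) : Prop :=
  (exists v : V, v != 0) /\
  forall S : V -> Prop,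
    S 0 ->
    (forall (c : C) (u v : V), S u -> S v -> S (c *: u + v)) ->
    (forall b, inG m 0 b -> forall v, S v -> S (rho b v)) ->
    (forall v, S v -> v = 0) \/ (forall v, S v).

End LieAlg.

(* Write X_j (j < 2n) for the commuting elements I_0, ..., I_{n-1}, J_0, ..., J_{n-1}
   of G^(m,0) that are not in G^(m,n).  By the universal property, W' is spanned by the
   monomials in the X_j applied to w.  Since n <= m, [G^(m,0), G^(m,0)] lies in
   G^(m+n,n), and psi vanishes on [G^(m+n,n), G^(m,0)]; hence G^(m+n,n) acts on all
   of W' by psi, which is the second claim.  For a in G^(m,n), rho(a) - psi(a) kills w and
   commutes with each X_j up to the scalar psi([a, X_j]), so it acts like the derivation
   sum_j psi([a, X_j]) d/dX_j and preserves submodules.  Taking a = L_p, H_p with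
   p = m + n - 1 - k, the hypothesis psi(I_{m+n-1}) psi(J_{m+n-1}) <> 0 makes these
   coefficient vectors triangular of full rank, so every d/dX_j is realised.  A nonzero
   vector of a submodule is then differentiated down to a vector killed by all d/dX_j,
   which the Euler operator sum_j X_j d/dX_j shows to be a nonzero multiple of w.
   Finally w <> 0, as W' maps w to 1 in a polynomial realisation on C[X_j]. *)

From HB Require Import structures.
From mathcomp Require Import all_boot all_order all_algebra.
From mathcomp Require Import reals complex.
From mathcomp Require Import boolp.
From mathcomp Require Import zify ring.
From mathcomp Require Import mpoly.
Import Order.TTheory GRing.Theory Num.Theory.
Local Open Scope ring_scope.
Set Implicit Arguments. Unset Strict Implicit. Unset Printing Implicit Defensive.

(** * Linear operators, filtrations and the Euler operator *)

Lemma eq_big_all (T I : Type) {idx : T} {op : T -> T -> T} (r : seq I) (P : pred I)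
    (F1 F2 : I -> T) :
  all P r -> (forall i, P i -> F1 i = F2 i) ->
  \big[op/idx]_(i <- r) F1 i = \big[op/idx]_(i <- r) F2 i.
Proof.
move=> + eqF; elim: r => [|i r IH] /=; rewrite ?big_nil ?big_cons //.
by case/andP=> /eqF-> /IH->.
Qed.

Section LinearFun.
Variables (K : pzRingType) (U W : lmodType K) (f : U -> W).
Hypothesis f_lin : linear f.
Let F : {linear U -> W} := HB.pack f (GRing.isLinear.Build K U W *:%R f f_lin).
Lemma lin0 : f 0 = 0. Proof. exact: linear0 F. Qed.
Lemma linD u v : f (u + v) = f u + f v. Proof. exact: (linearD F u v). Qed.
Lemma linB u v : f (u - v) = f u - f v. Proof. exact: (linearB F u v). Qed.
Lemma linZ c u : f (c *: u) = c *: f u. Proof. exact: (scalable_linear f_lin c u). Qed.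
Lemma lin_sum (I : Type) (r : seq I) (P : pred I) (G : I -> U) :
  f (\sum_(i <- r | P i) G i) = \sum_(i <- r | P i) f (G i).
Proof. exact: (raddf_sum F). Qed.
End LinearFun.

Section Filtration.
Variables (K : pzRingType) (V : lmodType K) (I : Type) (X : I -> V -> V) (w : V).

Inductive xfilt : nat -> V -> Prop :=
  | xfilt_w d c : xfilt d (c *: w)
  | xfilt_comb d c u v : xfilt d u -> xfilt d v -> xfilt d (c *: u + v)
  | xfilt_X d j u : xfilt d u -> xfilt d.+1 (X j u).

Lemma xfilt0 d : xfilt d 0.
Proof. by rewrite -(scale0r w); apply: xfilt_w. Qed.

Lemma xfiltS d u : xfilt d u -> xfilt d.+1 u.
Proof. by elim=> {d u} *; constructor. Qed.

Lemma xfilt_le d d' u : (d <= d')%N -> xfilt d u -> xfilt d' u.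
Proof.
move=> le_dd' u_d; rewrite -(subnKC le_dd').
by elim: (d' - d)%N => [|k IH]; rewrite ?addn0 // addnS; apply: xfiltS.
Qed.

Lemma xfiltD d u v : xfilt d u -> xfilt d v -> xfilt d (u + v).
Proof. by move=> u_d v_d; rewrite -[u]scale1r; apply: xfilt_comb. Qed.

Lemma xfiltZ d c u : xfilt d u -> xfilt d (c *: u).
Proof. by move=> u_d; rewrite -[_ *: _]addr0; apply: xfilt_comb u_d (xfilt0 _). Qed.

Hypothesis X_lin : forall j, linear (X j).

Lemma xfilt_lower (T : V -> V) (s : I -> K) :
  linear T -> T w = 0 -> (forall j u, T (X j u) = X j (T u) + s j *: u) ->
  forall d u, xfilt d u -> if d is d'.+1 then xfilt d' (T u) else T u = 0.
Proof.
move=> T_lin T_w T_X d u; elim=> {d u} [d c|d c u v _ IHu _ IHv|d j u u_d IH].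
- by rewrite linZ // T_w scaler0; case: d => // d; apply: xfilt0.
- by rewrite T_lin; case: d IHu IHv => [-> ->|d]; [rewrite scaler0 addr0 | apply: xfilt_comb].
- rewrite T_X addrC; case: d u_d IH => [u_0 ->|d u_d IH].
    by rewrite lin0 //; apply: xfilt_comb u_0 (xfilt0 _).
  exact: xfilt_comb u_d (xfilt_X _ IH).
Qed.

Lemma xfilt_stable (T : V -> V) (s : I -> K) :
  linear T -> T w = 0 -> (forall j u, T (X j u) = X j (T u) + s j *: u) ->
  forall d u, xfilt d u -> xfilt d (T u).
Proof.
move=> T_lin T_w T_X d u u_d; have := xfilt_lower T_lin T_w T_X u_d.
by case: d u_d => [_ ->|d _ /xfiltS]; first exact: xfilt0.
Qed.

End Filtration.

Section FallingFactorial.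
Variables (K : comPzRingType) (V : lmodType K) (N : V -> V).
Hypothesis N_lin : linear N.

(* [ffact_op a k = (N - a) (N - a - 1) ... (N - a - k + 1)] *)
Fixpoint ffact_op (a : K) (k : nat) (v : V) : V :=
  if k is k'.+1 then N (ffact_op (a + 1) k' v) - a *: ffact_op (a + 1) k' v else v.

Lemma ffact_op_linear a k : linear (ffact_op a k).
Proof.
elim: k a => [//|k IH] a c u v /=.
rewrite IH N_lin scalerDr scalerBr !scalerA [a * c]mulrC.
by rewrite opprD addrACA.
Qed.

Lemma ffact_op_ker u a k : N u = 0 ->
  ffact_op a k u = (\prod_(i < k) - (a + i%:R)) *: u.
Proof.
move=> N_u; elim: k a => [|k IH] a /=; first by rewrite big_ord0 scale1r.
rewrite IH linZ // N_u scaler0 sub0r big_ord_recl /= addr0 scalerA -scaleNr mulNr.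
congr (- (a * _) *: u); apply: eq_bigr => i _.
by rewrite /bump leq0n add1n -natr1 addrA [in RHS]addrAC.
Qed.

Lemma ffact_op_shift (X : V -> V) : linear X -> (forall u, N (X u) = X (N u) + X u) ->
  forall a k u, ffact_op a k (X u) = X (ffact_op (a - 1) k u).
Proof.
move=> X_lin N_X a k; elim: k a => [//|k IH] a u /=.
by rewrite IH addrK subrK N_X linB // !(linZ X_lin) scalerBl scale1r opprB addrA.
Qed.

End FallingFactorial.

Section EulerOperator.
Variables (K : numFieldType) (V : lmodType K) (I : Type) (X : I -> V -> V) (w : V).
Variable N : V -> V.
Hypotheses (X_lin : forall j, linear (X j)) (N_lin : linear N) (N_w : N w = 0).
Hypothesis N_X : forall j u, N (X j u) = X j (N u) + X j u.

(* N multiplies a monomial of degree e in the X j by e, so (N - 1) ... (N - d) sends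
   the monomials of degree at most d to multiples of w. *)
Lemma ffact_op_xfilt d u : xfilt X w d u -> exists c, ffact_op N 1 d u = c *: w.
Proof.
have F_lin a k := ffact_op_linear N_lin a k.
elim=> {d u} [d c|d c u v _ [cu cu_E] _ [cv cv_E]|d j u _ [c c_E]].
- by rewrite (linZ (F_lin _ _)) ffact_op_ker // scalerA; eexists.
- by exists (c * cu + cv); rewrite F_lin cu_E cv_E scalerDl scalerA.
- exists 0; rewrite ffact_op_shift // subrr /= add0r c_E linZ // N_w scaler0.
  by rewrite !scale0r subr0 lin0.
Qed.

Lemma euler_ker d u : xfilt X w d u -> N u = 0 -> exists c, u = c *: w.
Proof.
move=> u_d N_u; have [c] := ffact_op_xfilt u_d; rewrite ffact_op_ker //.
set k := \prod_(i < d) _ => k_E.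
have k0 : k != 0.
  by apply/prodf_neq0 => i _; rewrite oppr_eq0 addrC natr1 pnatr_eq0.
by exists (k^-1 * c); rewrite -scalerA -k_E scalerA mulVf // scale1r.
Qed.

End EulerOperator.

(** * The basis of G and Whittaker functions *)

Lemma inG_mono (m m' n n' : nat) (b : gbasis) :
  (m <= m')%N -> (n <= n')%N -> inG m' n' b -> inG m n b.
Proof. by move=> le_m le_n; case: b => //= k; lia. Qed.

Lemma inG_brk (R : realType) (m n : nat) (a b : gbasis) : (n <= m)%N ->
  inG m 0 a -> inG m 0 b -> all (fun p => inG (m + n) n p.2) (brk R a b).
Proof.
by move=> le_nm; case: a => p; case: b => q //=; rewrite ?andbT; lia.
Qed.

Definition psi_brk (R : realType) (psi : gbasis -> R[i]) (a b : gbasis) : R[i] :=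
  \sum_(p <- brk R a b) p.1 * psi p.2.

Lemma psi_brk_antisym (R : realType) (psi : gbasis -> R[i]) (a b : gbasis) :
  psi_brk psi a b = - psi_brk psi b a.
Proof.
rewrite /psi_brk; case: a => [p|p|p|p|||]; case: b => [q|q|q|q|||] //=;
  rewrite ?big_cons ?big_nil ?addr0 ?oppr0 //= /cint /delta0 ?(addrC q p); try ring.
all: case: (p + q =P 0) => [/eqP|_] /=; last by ring.
all: by rewrite addr_eq0 => /eqP->; ring.
Qed.

(* The 2n elements I_0, ..., I_{n-1}, J_0, ..., J_{n-1} of G^(m,0) outside G^(m,n),
   indexed by ['I_(n + n)]; [xindex n] is the partial inverse of [xvar]. *)
Definition xvar (n : nat) (j : 'I_(n + n)) : gbasis :=
  match split j with inl k => BI (k : nat)%:Z | inr k => BJ (k : nat)%:Z end.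

Definition xindex (n : nat) (b : gbasis) : option 'I_(n + n) :=
  match b with
  | BI (Posz k) => omap (@lshift n n) (insub k)
  | BJ (Posz k) => omap (@rshift n n) (insub k)
  | _ => None
  end.

Lemma xvar_lshift (n : nat) (k : 'I_n) : xvar (lshift n k) = BI (k : nat)%:Z.
Proof. by rewrite /xvar (unsplitK (inl k : 'I_n + 'I_n)). Qed.

Lemma xvar_rshift (n : nat) (k : 'I_n) : xvar (rshift n k) = BJ (k : nat)%:Z.
Proof. by rewrite /xvar (unsplitK (inr k : 'I_n + 'I_n)). Qed.

Variant xindex_spec (m n : nat) (b : gbasis) : option 'I_(n + n) -> Prop :=
  | XindexVar j of b = xvar j : @xindex_spec m n b (Some j)
  | XindexSub of inG m n b : @xindex_spec m n b None.

Lemma xindexP (m n : nat) (b : gbasis) : inG m 0 b -> @xindex_spec m n b (xindex n b).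
Proof.
case: b => [k|k|[k|//]|[k|//]|||] /= b_in; try by constructor.
all: case: insubP => [k' _ <- /=|]; last by rewrite -leqNgt; constructor.
all: by apply: XindexVar; rewrite ?xvar_lshift ?xvar_rshift.
Qed.

Lemma xindex_inG (m n : nat) (b : gbasis) : inG m n b -> xindex n b = None.
Proof. by case: b => [k|k|[k|//]|[k|//]|||] //= k_ge; rewrite insubN // -leqNgt. Qed.

Lemma xvar_inG (m n : nat) (j : 'I_(n + n)) : inG m 0 (xvar j).
Proof. by rewrite /xvar; case: split. Qed.

Lemma brk_xvar (R : realType) (n : nat) (i j : 'I_(n + n)) :
  brk R (xvar i) (xvar j) = [::].
Proof. by rewrite /xvar; case: split; case: split. Qed.

Definition xlevel (n : nat) (j : 'I_(n + n)) : 'I_n :=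
  match split j with inl k | inr k => k end.

Lemma xlevel_lshift (n : nat) (k : 'I_n) : xlevel (lshift n k) = k.
Proof. by rewrite /xlevel (unsplitK (inl k : 'I_n + 'I_n)). Qed.

Lemma xlevel_rshift (n : nat) (k : 'I_n) : xlevel (rshift n k) = k.
Proof. by rewrite /xlevel (unsplitK (inr k : 'I_n + 'I_n)). Qed.

Lemma xlevel_shift (n : nat) (j : 'I_(n + n)) :
  j = lshift n (xlevel j) \/ j = rshift n (xlevel j).
Proof.
by case: (split_ordP j) => k ->; rewrite ?xlevel_lshift ?xlevel_rshift; [left|right].
Qed.

Definition xcoef (R : realType) (n : nat) (psi : gbasis -> R[i]) (b : gbasis)
  (j : 'I_(n + n)) : R[i] := psi_brk psi b (xvar j).

Section Whittaker.
Variables (R : realType) (m n : nat) (psi : gbasis -> R[i]).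
Hypothesis psiW : whittaker m n psi.

Lemma whittaker_IJ_high (q : int) :
  (m + n)%N%:Z <= q -> psi (BI q) = 0 /\ psi (BJ q) = 0.
Proof.
have psiH b : inG m n b -> psi_brk psi (BH m%:Z) b = 0 by apply: psiW => /=.
move=> q_ge; have qm_ge : n%:Z <= q - m%:Z by lia.
have := psiH (BI (q - m%:Z)) qm_ge; have := psiH (BJ (q - m%:Z)) qm_ge.
rewrite /psi_brk !big_seq1 mul1r mulN1r addrCA subrr addr0 => /eqP.
by rewrite oppr_eq0 => /eqP.
Qed.

Lemma xcoef_LH_high (p : int) (j : 'I_(n + n)) :
  (m + n)%N%:Z <= p + (xlevel j : nat)%:Z ->
  xcoef psi (BL p) j = 0 /\ xcoef psi (BH p) j = 0.
Proof.
rewrite /xcoef /psi_brk; case: (split_ordP j) => k ->;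
  rewrite ?xlevel_lshift ?xlevel_rshift ?xvar_lshift ?xvar_rshift !big_seq1 /= => ge_top.
- by rewrite (whittaker_IJ_high ge_top).1 !mulr0.
- by rewrite (whittaker_IJ_high ge_top).2 !mulr0.
Qed.

Lemma xcoef_high (b : gbasis) (j : 'I_(n + n)) : inG (m + n) n b -> xcoef psi b j = 0.
Proof.
have LH p : (m + n)%N%:Z <= p -> xcoef psi (BL p) j = 0 /\ xcoef psi (BH p) j = 0.
  by move=> p_ge; apply: xcoef_LH_high; lia.
case: b => [p|p|p|p|||] /= b_high; try by case: (LH p b_high).
all: by rewrite /xcoef /psi_brk /xvar; case: split => k; rewrite big_nil.
Qed.

Lemma psi_brk_xindex (a b : gbasis) : inG m 0 a -> inG m 0 b ->
  psi_brk psi a b = oapp (xcoef psi a) 0 (xindex n b) - oapp (xcoef psi b) 0 (xindex n a).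
Proof.
move=> a_in b_in; case: (xindexP n a_in) => [i ->|a_sub];
  case: (xindexP n b_in) => [j ->|b_sub] /=.
- by rewrite /xcoef /psi_brk !brk_xvar !big_nil subrr.
- by rewrite sub0r psi_brk_antisym.
- by rewrite subr0.
- by rewrite subrr; apply: psiW.
Qed.

Lemma psi_brk_high (a b : gbasis) : inG (m + n) n a -> inG m 0 b -> psi_brk psi a b = 0.
Proof.
move=> a_high b_in; have a_in : inG m n a by apply: inG_mono a_high => //; lia.
rewrite psi_brk_xindex ?(inG_mono _ _ a_in) // (xindex_inG a_in) subr0.
by case: (xindex n b) => //= j; rewrite xcoef_high.
Qed.

Section Deltas.
Hypothesis le_nm : (n <= m)%N.
Hypothesis psi_top : psi (BI (m + n - 1)%N%:Z) * psi (BJ (m + n - 1)%N%:Z) != 0.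
Variable P : ('I_(n + n) -> R[i]) -> Prop.
Hypothesis P0 : P (fun _ => 0).
Hypothesis P_ext : forall s1 s2, s1 =1 s2 -> P s1 -> P s2.
Hypothesis P_comb : forall s1 s2, P s1 -> P s2 -> forall c, P (fun j => c * s1 j + s2 j).
Hypothesis P_xcoef : forall a, inG m n a -> P (xcoef psi a).

Local Notation delta j0 := (fun j : 'I_(n + n) => (j == j0)%:R : R[i]).

Lemma xspan_delta_from (k : nat) (t : 'I_(n + n) -> R[i]) (j0 : 'I_(n + n)) :
  (forall s, (forall j, (k <= xlevel j)%N -> s j = 0) -> P s) ->
  P t -> (k <= xlevel j0)%N -> t j0 != 0 ->
  (forall j, j != j0 -> (k <= xlevel j)%N -> t j = 0) -> P (delta j0).
Proof.
move=> P_low Pt j0_ge tj0 t_van.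
pose low j := if (xlevel j < k)%N then - (t j0)^-1 * t j else 0.
have Plow : P low by apply: P_low => j; rewrite /low ltnNge => ->.
apply: P_ext (P_comb Pt Plow (t j0)^-1) => j.
rewrite /low; case: (eqVneq j j0) => [->|nj0] /=.
  by rewrite mulVf // ltnNge j0_ge addr0.
case: ltnP => [_|j_ge]; first by rewrite mulNr addrN.
by rewrite (t_van j) // mulr0 addr0.
Qed.

(* For p = m + n - 1 - k, the coefficient vectors of L_p and H_p vanish above level k and
   take the values ((k - p) alpha, (k - p) beta) and (alpha, - beta) at level k, which are
   independent as alpha beta <> 0. *)
Lemma xspan_deltas_level (k : 'I_n) :
  (forall s, (forall j, (k <= xlevel j)%N -> s j = 0) -> P s) ->
  P (delta (lshift n k)) /\ P (delta (rshift n k)).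
Proof.
move=> P_low; have lt_kn := ltn_ord k; set p := (m + n - 1 - k)%N%:Z.
set alpha := psi (BI (m + n - 1)%N%:Z); set beta := psi (BJ (m + n - 1)%N%:Z).
have /norP[alpha0 beta0] : ~~ ((alpha == 0) || (beta == 0)) by rewrite -mulf_eq0.
have pL : inG m n (BL p) by rewrite /= /p; lia.
have pH : inG m n (BH p) by rewrite /= /p; lia.
have kp0 : cint R (k%:Z - p) != 0 by rewrite /cint intr_eq0 /p; lia.
have kp_top : p + k%:Z = (m + n - 1)%N%:Z by rewrite /p; lia.
pose t (e : R[i]) (j : 'I_(n + n)) :=
  (cint R (k%:Z - p))^-1 * xcoef psi (BL p) j + e * xcoef psi (BH p) j.
have Pt e : P (t e).
  apply: P_comb (P_xcoef pL) _ _; apply: P_ext (P_comb (P_xcoef pH) P0 e) => j.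
  by rewrite addr0.
have t_high e j : (k < xlevel j)%N -> t e j = 0.
  move=> j_gt; rewrite /t; have [-> ->] : xcoef psi (BL p) j = 0 /\ xcoef psi (BH p) j = 0.
    by apply: xcoef_LH_high; rewrite /p; lia.
  by rewrite !mulr0 addr0.
have t_l e : t e (lshift n k) = (1 + e) * alpha.
  by rewrite /t /xcoef xvar_lshift /psi_brk !big_seq1 /= kp_top mulKf // /alpha; ring.
have t_r e : t e (rshift n k) = (1 - e) * beta.
  by rewrite /t /xcoef xvar_rshift /psi_brk !big_seq1 /= kp_top mulKf // /beta; ring.
have t_level e j : (k <= xlevel j)%N -> j != lshift n k -> j != rshift n k -> t e j = 0.
  move=> j_ge; case: (ltnP k (xlevel j)) => [/(t_high e j) //|j_le].
  have /val_inj j_k : xlevel j = k :> nat by lia.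
  by case: (xlevel_shift j) => ->; rewrite j_k eqxx.
have two0 : (1 + 1 : R[i]) != 0 by rewrite (_ : 1 + 1 = 2%:R) // pnatr_eq0.
split.
- apply: (xspan_delta_from P_low (Pt 1)); first by rewrite xlevel_lshift.
    by rewrite t_l mulf_neq0.
  move=> j jl j_ge; have [->|jr] := eqVneq j (rshift n k); first by rewrite t_r subrr mul0r.
  exact: t_level.
- apply: (xspan_delta_from P_low (Pt (-1))); first by rewrite xlevel_rshift.
    by rewrite t_r opprK mulf_neq0.
  move=> j jr j_ge; have [->|jl] := eqVneq j (lshift n k); first by rewrite t_l subrr mul0r.
  exact: t_level.
Qed.

Lemma xspan_low_levels (k : nat) : (k <= n)%N ->
  forall s, (forall j, (k <= xlevel j)%N -> s j = 0) -> P s.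
Proof.
elim: k => [_ s s0|k IH lt_kn s s_van].
  by apply: P_ext P0 => j; rewrite s0.
pose K : 'I_n := Ordinal lt_kn.
have [Pl Pr] := xspan_deltas_level (k := K) (IH (ltnW lt_kn)).
pose low j := if (xlevel j < k)%N then s j else 0.
have Plow : P low by apply: (IH (ltnW lt_kn) low) => j; rewrite /low ltnNge => ->.
apply: P_ext (P_comb Pl (P_comb Pr Plow (s (rshift n K))) (s (lshift n K))) => j.
rewrite /low; have [->|jl] := eqVneq j (lshift n K).
  by rewrite ?eqxx ?eq_lrshift xlevel_lshift ltnn /=; ring.
have [->|jr] := eqVneq j (rshift n K).
  by rewrite ?eqxx ?eq_rlshift xlevel_rshift ltnn /=; ring.
rewrite !mulr0 !add0r; case: ltnP => // j_ge; rewrite s_van // ltn_neqAle j_ge andbT.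
apply/eqP => /esym j_k; have j_K : xlevel j = K by apply: val_inj.
by case: (xlevel_shift j) => j_eq; [move: jl | move: jr]; rewrite {1}j_eq j_K eqxx.
Qed.

Lemma xspan_delta (j0 : 'I_(n + n)) : P (delta j0).
Proof. by apply: (xspan_low_levels (leqnn n)) => j; rewrite leqNgt ltn_ord. Qed.

End Deltas.
End Whittaker.

(** * The induced module *)

Definition submod (R : realType) (m : nat) (V : lmodType R[i]) (rho : gbasis -> V -> V)
    (S : V -> Prop) : Prop :=
  (forall (c : R[i]) u v, S u -> S v -> S (c *: u + v)) /\
  (forall b, inG m 0 b -> forall v, S v -> S (rho b v)).

Lemma submod0 (R : realType) (m : nat) (V : lmodType R[i]) (rho : gbasis -> V -> V)
    (S : V -> Prop) (u : V) : submod m rho S -> S u -> S 0.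
Proof. by case=> S_comb _ Su; have := S_comb (-1) u u Su Su; rewrite scaleN1r addNr. Qed.

Definition generated (R : realType) (m : nat) (V : lmodType R[i]) (rho : gbasis -> V -> V)
    (w : V) : pred V :=
  fun v => `[< forall S, submod m rho S -> S w -> S v >].

Lemma generated_closed (R : realType) (m : nat) (V : lmodType R[i])
    (rho : gbasis -> V -> V) (w : V) : GRing.subsemimod_closed (generated m rho w).
Proof.
have comb c u v : generated m rho w u -> generated m rho w v -> generated m rho w (c *: u + v).
  move=> /asboolP Gu /asboolP Gv; apply/asboolP => S S_sub Sw.
  by apply: S_sub.1; [apply: Gu | apply: Gv].
have G0 : generated m rho w 0 by apply/asboolP => S S_sub /(submod0 S_sub).
split; [split => // u v Gu Gv|move=> c u Gu].
- by rewrite -[u]scale1r; apply: comb.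
- by rewrite -[c *: u]addr0; apply: comb.
Qed.

Definition generated_sub (R : realType) (m : nat) (V : lmodType R[i])
  (rho : gbasis -> V -> V) (w : V) := {v : V | generated m rho w v}.

HB.instance Definition _ (R : realType) (m : nat) (V : lmodType R[i])
    (rho : gbasis -> V -> V) (w : V) :=
  [isSub for (@sval V (generated m rho w)) : generated_sub m rho w -> V].
HB.instance Definition _ (R : realType) (m : nat) (V : lmodType R[i])
    (rho : gbasis -> V -> V) (w : V) :=
  [Choice of generated_sub m rho w by <:].
HB.instance Definition _ (R : realType) (m : nat) (V : lmodType R[i])
    (rho : gbasis -> V -> V) (w : V) :=
  GRing.SubChoice_isSubLmodule.Build _ _ _ (generated_sub m rho w) (generated_closed m rho w).

Lemma sum_brk_eigen (R : realType) (V : lmodType R[i]) (rho : gbasis -> V -> V)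
    (psi : gbasis -> R[i]) (P : pred gbasis) (a b : gbasis) (u : V) :
  all (fun p => P p.2) (brk R a b) -> (forall c, P c -> rho c u = psi c *: u) ->
  \sum_(p <- brk R a b) p.1 *: rho p.2 u = psi_brk psi a b *: u.
Proof.
move=> brk_P rho_u; rewrite /psi_brk scaler_suml.
by apply: (eq_big_all (P := fun p => P p.2)) => // p /rho_u ->; rewrite scalerA.
Qed.

(* [T] acts on the span of the monomials in the X j applied to w as the derivation
   [sum_j s j d/dX j]. *)
Definition xderivation (R : realType) (m n : nat) (V : lmodType R[i])
    (rho : gbasis -> V -> V) (w : V) (T : V -> V) (s : 'I_(n + n) -> R[i]) : Prop :=
  [/\ linear T, T w = 0,
      forall j u, T (rho (xvar j) u) = rho (xvar j) (T u) + s j *: u &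
      forall S, submod m rho S -> forall u, S u -> S (T u)].

Section InducedModule.
Variables (R : realType) (m n : nat) (psi : gbasis -> R[i]).
Variables (V : lmodType R[i]) (rho : gbasis -> V -> V) (w : V).
Hypothesis ind : is_induced m n psi rho w.

Let rho_rep : is_rep m 0 rho. Proof. by case: ind. Qed.

Lemma rho_linear (b : gbasis) : inG m 0 b -> linear (rho b).
Proof. by move=> b_in; apply: rho_rep.1. Qed.

(* The universal property, applied to the submodule generated by w, gives a map into it
   whose composite with the inclusion fixes w, hence is the identity. *)
Lemma induced_generated (S : V -> Prop) : submod m rho S -> S w -> forall v, S v.
Proof.
case: ind => _ rho_w univ S_sub Sw v.
pose W := generated_sub m rho w.
have Gw : generated m rho w w by apply/asboolP.
pose w' : W := exist _ w Gw.
pose rho' b (x : W) : W := insubd x (rho b (val x)).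
have rho'E b x : inG m 0 b -> val (rho' b x) = rho b (val x).
  move=> b_in; rewrite /rho' insubdK //; apply/asboolP => T T_sub Tw.
  by apply: T_sub.2 => //; move/asboolP: (valP x); apply.
have rep' : is_rep m 0 rho'.
  split=> [b b_in c x y|a b a_in b_in x]; apply: val_inj.
    by rewrite rho'E // !linearP /= !rho'E // (rho_linear b_in).
  rewrite linearB [RHS]linear_sum /= !rho'E // rho_rep.2 //.
  apply: (eq_big_all (P := fun p => inG (m + 0) 0 p.2)) => [|p p_in].
    exact: inG_brk.
  by rewrite -rho'E //; apply: inG_mono p_in; rewrite ?addn0.
have rho'_w b : inG m n b -> rho' b w' = psi b *: w'.
  move=> b_in; apply: val_inj; rewrite linearZ /= rho'E ?rho_w //.
  exact: inG_mono b_in.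
have [f [f_lin f_rho f_w _]] := univ _ rho' w' rep' rho'_w.
have [g [_ _ _ g_uniq]] := univ _ rho w rho_rep rho_w.
have valf x : val (f x) = x.
  rewrite (g_uniq (fun x => val (f x))) -?(g_uniq id) // => [c y z|b b_in y|].
  - by rewrite f_lin linearP.
  - by rewrite f_rho // rho'E.
  - by rewrite f_w.
by rewrite -(valf v); move/asboolP: (valP (f v)); apply.
Qed.

Hypotheses (le_nm : (n <= m)%N) (psiW : whittaker m n psi).

Lemma rho_brk_eigen (u : V) (a b : gbasis) : inG m 0 a -> inG m 0 b ->
  (forall c, inG (m + n) n c -> rho c u = psi c *: u) ->
  rho a (rho b u) = rho b (rho a u) + psi_brk psi a b *: u.
Proof.
move=> a_in b_in high_u; move/eqP: (rho_rep.2 a b a_in b_in u); rewrite subr_eq => /eqP->.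
by rewrite addrC (sum_brk_eigen (psi := psi) (P := inG (m + n) n)) // inG_brk.
Qed.

Lemma rho_high (v : V) (a : gbasis) : inG (m + n) n a -> rho a v = psi a *: v.
Proof.
have high_in c : inG (m + n) n c -> inG m n c by apply: inG_mono => //; lia.
move: v a; apply: induced_generated; [split|]
  => [c u v u_high v_high a a_high|b b_in u u_high a a_high|a a_high].
- have a_in := inG_mono (leqnn m) (leq0n n) (high_in _ a_high).
  by rewrite rho_linear // u_high // v_high // scalerDr !scalerA mulrC.
- have a_in := inG_mono (leqnn m) (leq0n n) (high_in _ a_high).
  rewrite rho_brk_eigen // (psi_brk_high psiW) // scale0r addr0 u_high //.
  exact: linZ (rho_linear b_in) _ _.
- by case: ind => _ rho_w _; apply/rho_w/high_in.
Qed.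

Lemma rho_brk (a b : gbasis) (v : V) : inG m 0 a -> inG m 0 b ->
  rho a (rho b v) = rho b (rho a v) + psi_brk psi a b *: v.
Proof. by move=> a_in b_in; apply: rho_brk_eigen => // c; apply: rho_high. Qed.

Local Notation X j := (rho (xvar j)).
Local Notation Xs := (fun j : 'I_(n + n) => X j).

Lemma X_linear (j : 'I_(n + n)) : linear (X j).
Proof. exact/rho_linear/xvar_inG. Qed.

Lemma X_comm (i j : 'I_(n + n)) (u : V) : X i (X j u) = X j (X i u).
Proof. by rewrite rho_brk ?xvar_inG // /psi_brk brk_xvar big_nil scale0r addr0. Qed.

Lemma xderivation_of (a : gbasis) : inG m n a ->
  xderivation m rho w (fun v => rho a v - psi a *: v) (xcoef (n := n) psi a).
Proof.
move=> a_in; have a_in0 := inG_mono (leqnn m) (leq0n n) a_in.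
have a_lin := rho_linear a_in0.
split=> [c u v|| j u|S [S_comb S_rho] u Su].
- by rewrite a_lin scalerDr scalerBr !scalerA [c * _]mulrC opprD addrACA.
- by case: ind => _ rho_w _; rewrite rho_w // subrr.
- by rewrite rho_brk ?xvar_inG // (linB (X_linear j)) (linZ (X_linear j)) addrAC.
- by have := S_comb (- psi a) _ _ Su (S_rho _ a_in0 _ Su); rewrite scaleNr addrC.
Qed.

Definition realizable (s : 'I_(n + n) -> R[i]) : Prop := exists T, xderivation m rho w T s.

Lemma realizable0 : realizable (fun _ => 0).
Proof.
exists (fun _ => 0); split=> [c u v|//|j u|S S_sub u Su].
- by rewrite scaler0 addr0.
- by rewrite (lin0 (X_linear j)) scale0r addr0.
- exact: submod0 S_sub Su.
Qed.

Lemma realizable_ext (s1 s2 : 'I_(n + n) -> R[i]) : s1 =1 s2 -> realizable s1 -> realizable s2.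
Proof. by move=> eq_s [T [T_lin T_w T_X T_S]]; exists T; split=> // j u; rewrite T_X eq_s. Qed.

Lemma realizable_comb (s1 s2 : 'I_(n + n) -> R[i]) : realizable s1 -> realizable s2 ->
  forall c, realizable (fun j => c * s1 j + s2 j).
Proof.
move=> [T1 [T1_lin T1_w T1_X T1_S]] [T2 [T2_lin T2_w T2_X T2_S]] c.
exists (fun v => c *: T1 v + T2 v); split=> [c' u v||j u|S S_sub u Su].
- by rewrite T1_lin T2_lin !scalerDr !scalerA mulrC addrACA.
- by rewrite T1_w T2_w scaler0 add0r.
- rewrite T1_X T2_X (linD (X_linear j)) (linZ (X_linear j)) scalerDr scalerDl scalerA.
  by rewrite addrACA.
- by apply: S_sub.1; [apply: T1_S | apply: T2_S].
Qed.

Hypothesis psi_top : psi (BI (m + n - 1)%N%:Z) * psi (BJ (m + n - 1)%N%:Z) != 0.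

Lemma realizable_delta (j0 : 'I_(n + n)) : realizable (fun j => (j == j0)%:R).
Proof.
apply: (xspan_delta psiW le_nm psi_top realizable0 realizable_ext realizable_comb).
by move=> a a_in; exists (fun v => rho a v - psi a *: v); apply: xderivation_of.
Qed.

Lemma xfilt_exists (v : V) : exists d, xfilt Xs w d v.
Proof.
move: v; apply: induced_generated; [split|] => [c u v [du u_d] [dv v_d]|b b_in u [d u_d]|].
- exists (maxn du dv); apply: xfilt_comb.
    by apply: xfilt_le u_d; rewrite leq_maxl.
  by apply: xfilt_le v_d; rewrite leq_maxr.
- case: (xindexP n b_in) => [j ->|b_sub]; first by exists d.+1; apply: xfilt_X.
  have [T_lin T_w T_X _] := xderivation_of b_sub.
  exists d; rewrite -(subrK (psi b *: u) (rho b u)); apply: xfiltD (xfiltZ _ u_d).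
  exact: (xfilt_stable X_linear T_lin T_w T_X u_d).
- by exists 0%N; have := xfilt_w Xs w 0 1; rewrite scale1r.
Qed.

Section EulerOperator.
Variable D : 'I_(n + n) -> V -> V.
Hypothesis D_delta : forall j, xderivation m rho w (D j) (fun i => (i == j)%:R).

Let N (v : V) : V := \sum_(j < n + n) X j (D j v).

Lemma euler_linear : linear N.
Proof.
move=> c u v; rewrite /N scaler_sumr -big_split; apply: eq_bigr => j _ /=.
by have [D_lin _ _ _] := D_delta j; rewrite D_lin X_linear.
Qed.

Lemma euler_w : N w = 0.
Proof.
by rewrite /N big1 // => j _; have [_ -> _ _] := D_delta j; rewrite (lin0 (X_linear j)).
Qed.

Lemma euler_X (i : 'I_(n + n)) (u : V) : N (X i u) = X i (N u) + X i u.
Proof.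
rewrite /N (lin_sum (X_linear i)).
transitivity (\sum_(j < n + n) (X i (X j (D j u)) + (j == i)%:R *: X j u)).
  apply: eq_bigr => j _; have [_ _ D_X _] := D_delta j.
  by rewrite D_X (linD (X_linear j)) (linZ (X_linear j)) X_comm eq_sym.
rewrite big_split /=; congr (_ + _).
by rewrite (bigD1 i) //= eqxx scale1r big1 ?addr0 // => j /negbTE->; rewrite scale0r.
Qed.

Lemma submod_has_w (S : V -> Prop) : submod m rho S ->
  forall d u, xfilt Xs w d u -> u != 0 -> S u -> S w.
Proof.
move=> S_sub; have ker_w d u : xfilt Xs w d u -> u != 0 -> S u ->
    (forall j, D j u = 0) -> S w.
  move=> u_d u0 Su D0; have N0 : N u = 0.
    by rewrite /N big1 // => j _; rewrite D0 (lin0 (X_linear j)).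
  have [c u_E] := euler_ker X_linear euler_linear euler_w euler_X u_d N0.
  have c0 : c != 0 by apply: contraNneq u0 => c0; rewrite u_E c0 scale0r.
  have -> : w = c^-1 *: u + 0 by rewrite addr0 u_E scalerA mulVf // scale1r.
  exact: S_sub.1 Su (submod0 S_sub Su).
elim=> [|d IH] u u_d u0 Su;
  have [/existsP[j Dj]|/existsPn D0] := boolP [exists j, D j u != 0];
  try by apply: (ker_w _ u u_d) => // j; apply/eqP/negPn/D0.
- have [D_lin D_w D_X _] := D_delta j.
  by move: Dj; rewrite (xfilt_lower X_linear D_lin D_w D_X u_d) eqxx.
- have [D_lin D_w D_X D_S] := D_delta j.
  by apply: (IH (D j u)) => //; [exact: (xfilt_lower X_linear D_lin D_w D_X u_d) | exact: D_S].
Qed.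

End EulerOperator.

Lemma induced_irreducible : w != 0 -> irreducible_mod m rho.
Proof.
move=> w0; have [D D_delta] := choice realizable_delta.
split=> [|S _ S_comb S_rho]; first by exists w.
have S_sub : submod m rho S by [].
have [[u [Su u0]]|S_triv] := pselect (exists u, S u /\ u != 0); [right|left].
  have [d u_d] := xfilt_exists u.
  exact: induced_generated S_sub (submod_has_w D_delta S_sub u_d u0 Su).
by move=> v Sv; apply: contrapT => /eqP v0; apply: S_triv; exists v.
Qed.

End InducedModule.

(** * A polynomial realisation *)

Lemma mderivX1 (K : nzRingType) (k : nat) (i j : 'I_k) :
  mderiv j ('X_i : {mpoly K[k]}) = (j == i)%:R.
Proof.
rewrite mderivX mnm1E; case: (eqVneq i j) => [->|ne]; last by rewrite scale0r.
have -> : (U_(j) - U_(j))%MM = 0%MM by apply/mnmP => l; rewrite mnmBE subnn mnm0E.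
by rewrite mpolyX0 scale1r.
Qed.

Lemma mderiv_sum (K : nzRingType) (k : nat) (i : 'I_k) (I : Type) (r : seq I)
    (F : I -> {mpoly K[k]}) :
  mderiv i (\sum_(j <- r) F j) = \sum_(j <- r) mderiv i (F j).
Proof. exact: raddf_sum. Qed.

(* W' itself, realised on C[X_j]: G^(m,n) acts by psi plus the derivation
   [sum_j psi([b, X_j]) d/dX_j] and X_j by multiplication. *)
Section PolynomialModel.
Variables (R : realType) (m n : nat) (psi : gbasis -> R[i]).
Hypotheses (le_nm : (n <= m)%N) (psiW : whittaker m n psi).
Local Notation P := {mpoly R[i][n + n]}.

Let xderiv (b : gbasis) (p : P) : P := \sum_(i < n + n) xcoef psi b i *: mderiv i p.
Let xmul (o : option 'I_(n + n)) : P := oapp (fun j => 'X_j) 0 o.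
Let poly_rho (b : gbasis) (p : P) : P :=
  (if xindex n b is Some _ then 0 else psi b) *: p + xderiv b p + xmul (xindex n b) * p.

Lemma xderiv_linear (b : gbasis) : linear (xderiv b).
Proof.
move=> c p q; rewrite /xderiv scaler_sumr -big_split; apply: eq_bigr => i _ /=.
by rewrite linearP scalerDr !scalerA mulrC.
Qed.

Lemma xderiv_comm (a b : gbasis) (p : P) : xderiv a (xderiv b p) = xderiv b (xderiv a p).
Proof.
pose c (i j : 'I_(n + n)) := xcoef psi a i * xcoef psi b j.
rewrite /xderiv.
transitivity (\sum_(i < n + n) \sum_(j < n + n) c i j *: mderiv i (mderiv j p)).
  apply: eq_bigr => i _; rewrite mderiv_sum scaler_sumr; apply: eq_bigr => j _.
  by rewrite mderivZ scalerA.
rewrite exchange_big; apply: eq_bigr => j _; rewrite mderiv_sum scaler_sumr.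
by apply: eq_bigr => i _; rewrite mderivZ scalerA mderiv_comm /c mulrC.
Qed.

Lemma xderiv_xmul (b : gbasis) (o : option 'I_(n + n)) (p : P) :
  xderiv b (xmul o * p) = xmul o * xderiv b p + oapp (xcoef psi b) 0 o *: p.
Proof.
case: o => [j|] /=; last by rewrite !mul0r scale0r addr0 (lin0 (xderiv_linear b)).
rewrite /xderiv mulr_sumr.
transitivity (\sum_(i < n + n)
    ('X_j * (xcoef psi b i *: mderiv i p) + ((i == j)%:R * xcoef psi b i) *: p)).
  apply: eq_bigr => i _; rewrite mderivM mderivX1 scalerDr addrC -scalerAr; congr (_ + _).
  by case: eqP => _; rewrite ?mul1r ?mul0r ?scale0r ?scaler0.
rewrite big_split /= -scaler_suml; congr (_ + _ *: _).
by rewrite (bigD1 j) //= eqxx mul1r big1 ?addr0 // => i /negbTE->; rewrite mul0r.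
Qed.

Lemma poly_rho_high (b : gbasis) (p : P) : inG (m + n) n b -> poly_rho b p = psi b *: p.
Proof.
move=> b_high; have b_in : inG m n b by apply: inG_mono b_high => //; lia.
rewrite /poly_rho (xindex_inG b_in) /= mul0r addr0 /xderiv big1 ?addr0 // => i _.
by rewrite (xcoef_high psiW) // scale0r.
Qed.

Lemma poly_rho_rep : is_rep m 0 poly_rho.
Proof.
split=> [b _ c p q|a b a_in b_in p].
  by rewrite /poly_rho (xderiv_linear b) mulrDr -!mul_mpolyC; ring.
rewrite (sum_brk_eigen (psi := psi) (P := inG (m + n) n)) ?inG_brk //; last first.
  by move=> c c_in; apply: poly_rho_high.
rewrite (psi_brk_xindex psiW) // /poly_rho.
set sa := (if xindex n a is Some _ then 0 else psi a).
set sb := (if xindex n b is Some _ then 0 else psi b).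
rewrite !(linD (xderiv_linear a)) !(linD (xderiv_linear b)).
rewrite !(linZ (xderiv_linear a)) !(linZ (xderiv_linear b)) !xderiv_xmul (xderiv_comm a b).
by rewrite scalerBl -!mul_mpolyC; ring.
Qed.

Lemma induced_neq0 (V : lmodType R[i]) (rho : gbasis -> V -> V) (w : V) :
  is_induced m n psi rho w -> w != 0.
Proof.
case=> _ _ univ; have one_eigen b : inG m n b -> poly_rho b 1 = psi b *: 1.
  move=> b_in; rewrite /poly_rho (xindex_inG b_in) mul0r addr0 /xderiv big1 ?addr0 // => i _.
  by rewrite -mpolyC1 mderivC scaler0.
have [f [f_lin _ f_w _]] := univ _ poly_rho 1 poly_rho_rep one_eigen.
by apply: contra_neq (oner_neq0 P) => w0; rewrite -f_w w0 (lin0 f_lin).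
Qed.

End PolynomialModel.

Theorem proposition3p1 (R : realType) (m n : nat) (psi : gbasis -> R[i])
    (V : lmodType R[i]) (rho : gbasis -> V -> V) (w : V) :
  (0 < m)%N -> (n <= m)%N ->
  whittaker m n psi ->
  psi (BI (m + n - 1)%N%:Z) * psi (BJ (m + n - 1)%N%:Z) != 0 ->
  is_induced m n psi rho w ->
  irreducible_mod m rho /\
  (forall (v : V) (i : nat),
     [/\ rho (BL (m + n + i)%N%:Z) v = psi (BL (m + n + i)%N%:Z) *: v,
         rho (BH (m + n + i)%N%:Z) v = psi (BH (m + n + i)%N%:Z) *: v,
         rho (BI (n + i)%N%:Z) v = psi (BI (n + i)%N%:Z) *: v &
         rho (BJ (n + i)%N%:Z) v = psi (BJ (n + i)%N%:Z) *: v]).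
Proof.
move=> _ le_nm psiW psi_top ind; split.
  exact: induced_irreducible ind le_nm psiW psi_top (induced_neq0 le_nm psiW ind).
by move=> v i; split; apply: (rho_high ind le_nm psiW) => /=; lia.
Qed.
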